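(* Let $p$ be a prime and $k$ any field of characteristic $p$. Then $R_1^{(p)}$ equals the $T$-space of $k_0\langle X\rangle$ generated by the single element $[x,\underbrace{y,\ldots,y}_{p-1}]$, where $x,y\in X$ are distinct.
   Context: $X=\{x_1,x_2,\ldots\}$ is a countably infinite set and $k_0\langle X\rangle$ is the free associative $k$-algebra (without identity) on $X$. A $T$-space is a $k$-linear subspace closed under every algebra endomorphism of $k_0\langle X\rangle$; the $T$-space generated by a subset is the smallest $T$-space containing it. $S_p(v_1,\ldots,v_p)=\sum_{\sigma\in\Sigma_p}\prod_{i=1}^p v_{\sigma(i)}$, and $R_1^{(p)}$ is the $T$-space generated by $S_p(x_1,\ldots,x_p)$. Commutators are left-normed: $[a,b]=ab-ba$, $[a_1,\ldots,a_{n+1}]=[[a_1,\ldots,a_n],a_{n+1}]$. *)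

From mathcomp Require Import all_boot all_order all_algebra all_fingroup.
Set Implicit Arguments. Unset Strict Implicit. Unset Printing Implicit Defensive.
Import GRing.Theory.
Local Open Scope ring_scope.

(* The free associative algebra without identity k_0<X>, X = {x_0, x_1, ...}
   (variables indexed by nat).  A word is a [seq nat]; an element is a
   function [seq nat -> k] (coefficient of each word) which has finite
   support and vanishes on the empty word.  Concretely, elements are
   presented by finite formal sums [ncp] = lists of (coefficient, word). *)

Section FreeAlg.
Variable k : fieldType.

Definition ncp := seq (k * seq nat).

Definition denote (P : ncp) : seq nat -> k :=
  fun w => \sum_(t <- P | t.2 == w) t.1.

Definition nc_noconst (P : ncp) : bool := all (fun t => t.2 != [::]) P.

Definition kX (f : seq nat -> k) : Prop :=
  exists P : ncp, nc_noconst P /\ f = denote P.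

Definition nc_var (i : nat) : ncp := [:: (1, [:: i])].
Definition nc_add (P Q : ncp) : ncp := P ++ Q.
Definition nc_scale (c : k) (P : ncp) : ncp := [seq (c * t.1, t.2) | t <- P].
Definition nc_mul (P Q : ncp) : ncp :=
  [seq (t.1 * u.1, t.2 ++ u.2) | t <- P, u <- Q].
Definition nc_comm (P Q : ncp) : ncp :=
  nc_add (nc_mul P Q) (nc_scale (-1) (nc_mul Q P)).

Definition nc_comm_iter (P Q : ncp) (n : nat) : ncp :=
  iter n (fun C => nc_comm C Q) P.

Definition nc_symm (p : nat) : ncp :=
  [seq (1, [seq nat_of_ord (s i) | i <- enum 'I_p]) | s : {perm 'I_p} <- enum {perm 'I_p}].

Definition nc_word_subst (g : nat -> ncp) (w : seq nat) : ncp :=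
  foldr (fun i acc => nc_mul (g i) acc) [:: (1, [::])] w.
Definition nc_subst (g : nat -> ncp) (P : ncp) : ncp :=
  flatten [seq nc_scale t.1 (nc_word_subst g t.2) | t <- P].

(* T-spaces: k-linear subspaces of k_0<X> closed under all endomorphisms.
   An endomorphism of k_0<X> is determined by arbitrary images g i in k_0<X>. *)
Definition Tspace (S : (seq nat -> k) -> Prop) : Prop :=
  [/\ forall f, S f -> kX f,
      S (fun _ => 0),
      forall f h, S f -> S h -> S (fun w => f w + h w),
      forall (c : k) f, S f -> S (fun w => c * f w) &
      forall (g : nat -> ncp) (P : ncp),
        (forall i, nc_noconst (g i)) -> nc_noconst P ->
        S (denote P) -> S (denote (nc_subst g P))].

Definition Tgen (A : (seq nat -> k) -> Prop) (f : seq nat -> k) : Prop :=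
  forall S, Tspace S -> (forall h, A h -> S h) -> S f.

Definition R1 (p : nat) : (seq nat -> k) -> Prop :=
  Tgen (fun h => h = denote (nc_symm p)).

End FreeAlg.

(* In characteristic p the coefficients (-1)^i 'C(p-1, i) of the expansion of
   [x, y, ..., y] (p-1 copies of y) are all 1, so it is sum_i y^i x y^(p-1-i).
   Substituting x for x_0 and y for every other variable in S_p(x_0, ..., x_(p-1))
   produces each of these p words (p-1)! times, and (p-1)! = -1 by Wilson's
   theorem.  Conversely, substitute x_0 for x and sum_(j in J) x_(j+1) for y, for
   every subset J of {0, ..., p-2}, and add up the results with signs
   (-1)^(p-1-|J|): by inclusion-exclusion exactly the words in which every
   variable occurs survive, and their sum is S_p(x_0, ..., x_(p-1)). *)

From mathcomp Require Import all_boot all_order all_algebra all_fingroup.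
From mathcomp Require Import zify.
From Stdlib Require Import FunctionalExtensionality.
Set Implicit Arguments. Unset Strict Implicit. Unset Printing Implicit Defensive.
Import GRing.Theory.
Local Open Scope ring_scope.

Section FormalSums.
Variable k : fieldType.
Implicit Types (P Q : ncp k) (w : seq nat).

Lemma denote_nil w : denote ([::] : ncp k) w = 0.
Proof. by rewrite /denote big_nil. Qed.

Lemma denote_cons t P w :
  denote (t :: P) w = (if t.2 == w then t.1 else 0) + denote P w.
Proof. by rewrite /denote big_cons; case: ifP => _; rewrite ?add0r. Qed.

Lemma denote_cat P Q w : denote (P ++ Q) w = denote P w + denote Q w.
Proof. by rewrite /denote big_cat. Qed.

Lemma denote_map I (r : seq I) (c : I -> k) (W : I -> seq nat) w :
  denote [seq (c i, W i) | i <- r] w = \sum_(i <- r) (W i == w)%:R * c i.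
Proof.
elim: r => [|i r IH]; first by rewrite denote_nil big_nil.
by rewrite /= denote_cons IH big_cons /=; case: eqP; rewrite ?mul1r ?mul0r.
Qed.

Lemma denote_scale c P w : denote (nc_scale c P) w = c * denote P w.
Proof.
elim: P => [|t P IH]; first by rewrite /= !denote_nil mulr0.
by rewrite /= !denote_cons IH mulrDr; case: ifP; rewrite ?mulr0.
Qed.

Lemma denote_flatten (L : seq (ncp k)) w :
  denote (flatten L) w = \sum_(P <- L) denote P w.
Proof.
elim: L => [|P L IH]; first by rewrite denote_nil big_nil.
by rewrite /= denote_cat IH big_cons.
Qed.

Lemma denote_ones (ws : seq (seq nat)) w :
  denote [seq ((1 : k), u) | u <- ws] w = (count_mem w ws)%:R.
Proof.
elim: ws => [|u ws IH]; first by rewrite denote_nil.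
by rewrite /= denote_cons IH natrD eq_sym; case: eqP.
Qed.

Lemma denote_mul_var_nil P x : denote (nc_mul P (nc_var k x)) [::] = 0.
Proof. by rewrite /nc_mul allpairs1r /denote big_map big1 // => -[c []]. Qed.

Lemma denote_mul_var_rcons P x w y :
  denote (nc_mul P (nc_var k x)) (rcons w y) = (y == x)%:R * denote P w.
Proof.
rewrite /nc_mul allpairs1r /denote big_map /=.
under eq_bigl => t do rewrite cats1 eqseq_rcons.
have [_|_] := eqVneq y x; last by rewrite big1 ?mul0r // => t; rewrite andbF.
by rewrite mul1r; apply: congr_big => // t; rewrite ?andbT ?mulr1.
Qed.

Lemma denote_var_mul_nil P x : denote (nc_mul (nc_var k x) P) [::] = 0.
Proof. by rewrite /nc_mul allpairs1l /denote big_map big1. Qed.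

Lemma denote_var_mul_cons P x y w :
  denote (nc_mul (nc_var k x) P) (y :: w) = (y == x)%:R * denote P w.
Proof.
rewrite /nc_mul allpairs1l /denote big_map /=.
under eq_bigl => t do rewrite eqseq_cons.
have [_|_] := eqVneq y x; last by rewrite big1 ?mul0r.
by rewrite mul1r; apply: congr_big => // t; rewrite ?mul1r.
Qed.

Lemma eq_denote_comm_var P Q x : denote P =1 denote Q ->
  denote (nc_comm P (nc_var k x)) =1 denote (nc_comm Q (nc_var k x)).
Proof.
move=> eqPQ w; rewrite /nc_comm /nc_add !denote_cat !denote_scale.
congr (_ + - 1 * _).
- by case/lastP: w => [|w y]; rewrite ?denote_mul_var_nil // !denote_mul_var_rcons eqPQ.
- by case: w => [|y w]; rewrite ?denote_var_mul_nil // !denote_var_mul_cons eqPQ.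
Qed.

Lemma Tspace_sum (S : (seq nat -> k) -> Prop) I (r : seq I) (F : I -> seq nat -> k) :
  Tspace S -> (forall i, S (F i)) -> S (fun w => \sum_(i <- r) F i w).
Proof.
case=> _ S0 SD _ _ SF; elim: r => [|i r IH].
  suff -> : (fun w => \sum_(i <- [::]) F i w) = (fun _ => 0) by [].
  by apply: functional_extensionality => w; rewrite big_nil.
suff -> : (fun w => \sum_(j <- i :: r) F j w) = (fun w => F i w + \sum_(j <- r) F j w).
  exact: SD.
by apply: functional_extensionality => w; rewrite big_cons.
Qed.

Lemma Tspace_scale (S : (seq nat -> k) -> Prop) c f :
  Tspace S -> S f -> S (fun w => c * f w).
Proof. by case=> _ _ _ SZ _; apply: SZ. Qed.

End FormalSums.

Section CommutatorExpansion.
Variables (k : fieldType) (a b : nat).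

Definition comm_word n i : seq nat := nseq i b ++ a :: nseq (n - i) b.
Definition comm_coef n i : k := (-1) ^+ i * 'C(n, i)%:R.
Definition comm_expansion n : ncp k :=
  [seq (comm_coef n i, comm_word n i) | i <- index_iota 0 n.+1].

Lemma size_comm_word n i : (i <= n)%N -> size (comm_word n i) = n.+1.
Proof. by move=> le_in; rewrite size_cat /= !size_nseq; lia. Qed.

Lemma nth_comm_word n i j : (j <= n)%N ->
  nth 0%N (comm_word n i) j = if j == i then a else b.
Proof.
move=> le_jn; rewrite nth_cat size_nseq.
case: ltngtP => [lt_ji|lt_ij|->]; rewrite ?nth_nseq ?lt_ji ?subnn //.
by rewrite -(subnSK lt_ij) /= nth_nseq ifT //; lia.
Qed.

Lemma comm_word_cats1 n i : (i <= n)%N -> comm_word n i ++ [:: b] = comm_word n.+1 i.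
Proof. by move=> le_in; rewrite /comm_word -catA /= -[[:: b]]/(nseq 1 b) -nseqD addn1 subSn. Qed.

Lemma comm_coefS n i : comm_coef n.+1 i.+1 = comm_coef n i.+1 - comm_coef n i.
Proof. by rewrite /comm_coef binS natrD exprS mulrDr !mulN1r !mulNr. Qed.

Lemma comm_coef_small n : comm_coef n n.+1 = 0.
Proof. by rewrite /comm_coef bin_small // mulr0. Qed.

(* Pascal's rule: the two shifted copies of the expansion recombine. *)
Lemma denote_comm_expansionS n :
  denote (nc_comm (comm_expansion n) (nc_var k b)) =1 denote (comm_expansion n.+1).
Proof.
move=> w; rewrite /nc_comm /nc_add denote_cat denote_scale /nc_mul allpairs1r allpairs1l.
rewrite !denote_map /comm_expansion !big_map !big_mkord /= mulN1r.
under eq_bigr => i _ do rewrite comm_word_cats1 -1?ltnS // mulr1.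
under [in X in _ - X]eq_bigr => i _ do rewrite mul1r.
rewrite big_ord_recl [in RHS]big_ord_recl.
under [in RHS]eq_bigr => i _ do rewrite comm_coefS mulrBr.
rewrite sumrB [X in _ = _ + (X - _)]big_ord_recr /= comm_coef_small mulr0 addr0.
by rewrite addrA /comm_coef !bin0 !expr0.
Qed.

Lemma denote_comm_iter n :
  denote (nc_comm_iter (nc_var k a) (nc_var k b) n) =1 denote (comm_expansion n).
Proof.
elim: n => [|n IH] w.
  by rewrite /= !denote_cons !denote_nil /comm_coef bin0 expr0 mul1r.
by rewrite /nc_comm_iter iterS (eq_denote_comm_var _ IH) denote_comm_expansionS.
Qed.

Lemma comm_coef_pchar n i : prime n.+1 -> n.+1 \in [pchar k] -> (i <= n)%N ->
  comm_coef n i = 1.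
Proof.
move=> p_pr p_char; elim: i => [|i IH] le_in; first by rewrite /comm_coef expr0 bin0 mul1r.
have /eqP : 'C(n.+1, i.+1)%:R = 0 :> k.
  by apply/eqP; rewrite -(dvdn_pcharf p_char) prime_dvd_bin.
rewrite binS natrD addr_eq0 => /eqP binE.
by rewrite /comm_coef binE exprS mulrN mulN1r mulNr opprK -[RHS](IH (ltnW le_in)).
Qed.

Definition comm_sum n : ncp k := [seq (1, comm_word n i) | i <- index_iota 0 n.+1].

Lemma denote_comm_iter_pchar n : prime n.+1 -> n.+1 \in [pchar k] ->
  denote (nc_comm_iter (nc_var k a) (nc_var k b) n) = denote (comm_sum n).
Proof.
move=> p_pr p_char; apply: functional_extensionality => w.
rewrite denote_comm_iter !denote_map; apply: eq_big_seq => i.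
by rewrite mem_index_iota ltnS => /andP[_ le_in]; rewrite comm_coef_pchar.
Qed.

End CommutatorExpansion.

Definition word_choices (L : nat -> seq nat) (v : seq nat) : seq (seq nat) :=
  foldr (fun x acc => [seq y :: u | y <- L x, u <- acc]) [:: [::]] v.

Lemma mem_word_choices L v w :
  (w \in word_choices L v) = all2 (fun x y => y \in L x) v w.
Proof.
elim: v w => [|x v IH] [|y w] //=.
- by apply/negbTE/allpairsP => -[[? ?] /= [_ _]].
- apply/allpairsP/andP => [[[y' u] /= [Ly' Lu [-> ->]]]|[Ly Lw]].
    by rewrite -IH.
  by exists (y, w); rewrite /= Ly IH.
Qed.

Lemma uniq_word_choices L v : (forall x, uniq (L x)) -> uniq (word_choices L v).
Proof.
move=> uniqL; elim: v => [|x v IH] //=.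
by apply: allpairs_uniq => // -[? ?] [? ?] _ _ /= [-> ->].
Qed.

Lemma all2_andr (S T : Type) (r : S -> T -> bool) (q : pred T) s t :
  all2 (fun x y => r x y && q y) s t = all2 r s t && all q t.
Proof. by elim: s t => [|x s IH] [|y t] //=; rewrite IH andbACA. Qed.

Lemma all2_nth (r : nat -> nat -> bool) s t :
  all2 r s t = (size s == size t) &&
               all (fun j => r (nth 0%N s j) (nth 0%N t j)) (iota 0 (size s)).
Proof.
elim: s t => [|x s IH] [|y t] //=.
rewrite IH eqSS -add1n iotaDl all_map andbCA.
by congr (_ && (_ && _)); apply: eq_all => j.
Qed.

Lemma all2_mem_seq1 (h : nat -> nat) v w :
  all2 (fun x y => y \in [:: h x]) v w = (map h v == w).
Proof. by elim: v w => [|x v IH] [|y w] //=; rewrite inE IH eqseq_cons eq_sym. Qed.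

Section VariableSumSubstitution.
Variable k : fieldType.

Definition nc_varsum (L : seq nat) : ncp k := [seq (1, [:: y]) | y <- L].

Lemma nc_noconst_varsum L : nc_noconst (nc_varsum L).
Proof. by elim: L. Qed.

Lemma nc_mul_ones (l1 l2 : seq (seq nat)) :
  nc_mul [seq ((1 : k), u) | u <- l1] [seq (1, u) | u <- l2] =
  [seq (1, u) | u <- [seq u1 ++ u2 | u1 <- l1, u2 <- l2]].
Proof.
elim: l1 => [|u1 l1 IH] //=; rewrite /nc_mul /= map_cat -IH; congr (_ ++ _).
by rewrite -!map_comp; apply: eq_map => u /=; rewrite mulr1.
Qed.

Lemma nc_word_subst_varsum L v :
  nc_word_subst (fun x => nc_varsum (L x)) v = [seq (1, u) | u <- word_choices L v].
Proof.
elim: v => [|x v IH] //=; rewrite /nc_word_subst /= -/(nc_word_subst _ v) IH.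
have -> : nc_varsum (L x) = [seq (1, u) | u <- [seq [:: y] | y <- L x]].
  by rewrite -map_comp.
by rewrite nc_mul_ones allpairs_mapl.
Qed.

Lemma denote_subst (g : nat -> ncp k) P w :
  denote (nc_subst g P) w = \sum_(t <- P) t.1 * denote (nc_word_subst g t.2) w.
Proof.
by rewrite /nc_subst denote_flatten big_map; apply: eq_bigr => t _; rewrite denote_scale.
Qed.

Lemma denote_subst_varsum L P w : (forall x, uniq (L x)) ->
  denote (nc_subst (fun x => nc_varsum (L x)) P) w =
  \sum_(t <- P) t.1 * (all2 (fun x y => y \in L x) t.2 w)%:R.
Proof.
move=> uniqL; rewrite denote_subst; apply: eq_bigr => t _.
by rewrite nc_word_subst_varsum denote_ones count_uniq_mem ?uniq_word_choices ?mem_word_choices.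
Qed.

Lemma Tspace_subst_varsum (S : (seq nat -> k) -> Prop) L P :
  Tspace S -> nc_noconst P -> S (denote P) ->
  S (denote (nc_subst (fun x => nc_varsum (L x)) P)).
Proof. by case=> _ _ _ _ SF; apply: SF => x; apply: nc_noconst_varsum. Qed.

End VariableSumSubstitution.

Section PermutationWords.
Variable n : nat.

Definition perm_word (s : {perm 'I_n}) : seq nat := [seq val (s i) | i <- enum 'I_n].

Lemma size_perm_word s : size (perm_word s) = n.
Proof. by rewrite size_map size_enum_ord. Qed.

Lemma nth_perm_word s (i : 'I_n) : nth 0%N (perm_word s) i = s i.
Proof. by rewrite (nth_map i) ?size_enum_ord // nth_ord_enum. Qed.

Lemma perm_word_inj : injective perm_word.
Proof. by move=> s t eq_st; apply/permP => i; apply: val_inj; rewrite /= -!nth_perm_word eq_st. Qed.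

Lemma perm_word_surj w : size w = n -> {subset iota 0 n <= w} ->
  exists s, perm_word s = w.
Proof.
move=> size_w cover; have le_size : (size w <= size (iota 0 n))%N by rewrite size_iota size_w.
have uniq_w := leq_size_uniq (iota_uniq 0 n) cover le_size.
have [_ eq_w] := uniq_min_size (iota_uniq 0 n) cover le_size.
have lt_w (j : 'I_n) : (nth 0%N w j < n)%N.
  by have := mem_nth 0%N (_ : (j < size w)%N); rewrite size_w -eq_w mem_iota => /(_ (ltn_ord j)).
pose f j := Ordinal (lt_w j).
have f_inj : injective f.
  by move=> j1 j2 /(congr1 val) /eqP; rewrite /= nth_uniq ?size_w // => /eqP /val_inj.
exists (perm f_inj); apply: (@eq_from_nth _ 0%N); first by rewrite size_perm_word size_w.
by rewrite size_perm_word => j lt_jn; rewrite (nth_perm_word _ (Ordinal lt_jn)) permE.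
Qed.

End PermutationWords.

Lemma card_perm_maps n (i j : 'I_n.+1) :
  #|[pred s : {perm 'I_n.+1} | s i == j]| = n`!.
Proof.
pose c (t : {perm 'I_n.+1}) := (tperm i ord0 * t * tperm ord0 j)%g.
have cK : involutive c.
  by move=> t; rewrite /c !mulgA tperm2 mul1g -mulgA tperm2 mulg1.
have fix0 t : (t \in perm_on [set~ ord0]) = (t ord0 == ord0).
  apply/idP/eqP => [t_on|t0]; first by apply: out_perm t_on _; rewrite !inE eqxx.
  by apply/subsetP => x; rewrite !inE; apply: contra => /eqP ->; rewrite t0.
have -> : n`! = #|perm_on [set~ (ord0 : 'I_n.+1)]| by rewrite card_perm cardsC1 card_ord.
rewrite -(card_imset (perm_on _) (inv_inj cK)); apply: eq_card => s; rewrite inE.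
apply/eqP/imsetP => [sij|[t t_on ->]].
  by exists (c s); rewrite ?cK // fix0 /c !permM tpermR sij tpermR.
by move: t_on; rewrite fix0 /c !permM tpermL => /eqP ->; rewrite tpermL.
Qed.

Lemma Wilson_pchar (R : fieldType) n : prime n.+1 -> n.+1 \in [pchar R] -> n`!%:R = -1 :> R.
Proof.
move=> p_pr p_char; move: (p_pr); rewrite Wilson ?prime_gt1 // (dvdn_pcharf p_char).
by rewrite -addn1 natrD addr_eq0 => /eqP.
Qed.

Lemma perm_word_pair a b n (s : {perm 'I_n.+1}) :
  [seq if x == 0%N then a else b | x <- perm_word s] = comm_word a b n (s^-1 ord0)%g.
Proof.
apply: (@eq_from_nth _ 0%N); first by rewrite size_map size_perm_word size_comm_word // -ltnS.
rewrite size_map size_perm_word => j lt_jn.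
rewrite (nth_map 0%N) ?size_perm_word // nth_comm_word // (nth_perm_word s (Ordinal lt_jn)).
by rewrite -[_ == 0%N]/(s (Ordinal lt_jn) == ord0) (can2_eq (permK s) (permKV s)).
Qed.

(* Each of the p positions of the letter a is produced by (p-1)! = -1 permutations. *)
Lemma denote_subst_symm_pair (k : fieldType) a b n w :
  prime n.+1 -> n.+1 \in [pchar k] ->
  denote (nc_subst (fun x => nc_varsum k [:: if x == 0%N then a else b]) (nc_symm k n.+1)) w
  = - denote (comm_sum k a b n) w.
Proof.
move=> p_pr p_char; rewrite denote_subst_varsum // /nc_symm big_map.
under eq_bigr => s _ do rewrite /= all2_mem_seq1 perm_word_pair mul1r.
rewrite (partition_big (fun s : {perm 'I_n.+1} => (s^-1)%g ord0) xpredT) //=.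
rewrite denote_map big_mkord -sumrN; apply: eq_bigr => j _.
rewrite (eq_bigr (fun _ => (comm_word a b n j == w)%:R)) => [|s /eqP -> //].
rewrite big_enum_cond sumr_const mulr1.
rewrite (@eq_card _ _ [pred s : {perm 'I_n.+1} | s j == ord0]) => [|s]; last first.
  by rewrite !inE (can2_eq (permK s) (permKV s)) eq_sym.
by rewrite card_perm_maps -[_ *+ n`!]mulr_natr (Wilson_pchar p_pr p_char) mulrN1.
Qed.

Lemma nc_noconst_symm (k : fieldType) n : nc_noconst (nc_symm k n.+1).
Proof.
by rewrite /nc_noconst all_map; apply/allP => s _; rewrite /= -size_eq0 (size_perm_word s).
Qed.

Lemma Tspace_comm_sum_of_symm (k : fieldType) a b n (S : (seq nat -> k) -> Prop) :
  prime n.+1 -> n.+1 \in [pchar k] -> Tspace S ->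
  S (denote (nc_symm k n.+1)) -> S (denote (comm_sum k a b n)).
Proof.
move=> p_pr p_char S_T S_symm.
pose L x := [:: if x == 0%N then a else b].
have -> : denote (comm_sum k a b n) =
          (fun w => -1 * denote (nc_subst (fun x => nc_varsum k (L x)) (nc_symm k n.+1)) w).
  by apply: functional_extensionality => w; rewrite denote_subst_symm_pair // mulN1r opprK.
exact/(Tspace_scale _ S_T)/(Tspace_subst_varsum _ S_T (nc_noconst_symm k n)).
Qed.

Lemma natr_andb {R : pzSemiRingType} (b1 b2 : bool) : (b1 && b2)%:R = b1%:R * b2%:R :> R.
Proof. by case: b1; rewrite ?mul1r ?mul0r. Qed.

Lemma alternating_sum_supsets (R : pzRingType) (T : finType) (M : {set T}) :
  \sum_(J : {set T}) (-1) ^+ #|~: J| * (M \subset J)%:R = (M == setT)%:R :> R.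
Proof.
have [->|neq_MT] := eqVneq M setT.
  rewrite (bigD1 setT) //= setCT cards0 expr0 subxx mul1r big1 ?addr0 // => J neq_JT.
  by rewrite subTset (negbTE neq_JT) mulr0.
have /subsetPn[e _ Me] : ~~ ([set: T] \subset M) by rewrite subTset.
rewrite (bigID (fun J : {set T} => e \in J)) /=.
rewrite (reindex_onto (fun J => e |: J) (fun J => J :\ e)) /=; last first.
  by move=> J eJ; rewrite setD1K.
rewrite (eq_bigl (fun J : {set T} => e \notin J)) => [|J]; last first.
  rewrite setU11 /=; apply/eqP/idP => [<-|eJ]; first by rewrite setD11.
  by rewrite setU1K.
rewrite -big_split big1 // => J eJ.
have -> : (M \subset e |: J) = (M \subset J).
  apply/idP/idP => [/subsetP MeJ|MJ]; last exact: subset_trans MJ (subsetUr _ _).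
  apply/subsetP => x Mx; move: (MeJ x Mx); rewrite !inE.
  by case: eqP => // xe; move: Me; rewrite -xe Mx.
have -> : #|~: J| = #|~: (e |: J)|.+1.
  by rewrite (cardsD1 e (~: J)) inE eJ setCU setDE setIC.
by rewrite /= exprS mulN1r mulNr addrN.
Qed.

Section SymmetricFromCommutator.
Variables (k : fieldType) (a b n : nat).
Hypothesis neq_ab : a != b.

Definition restr_vars (J : {set 'I_n}) (x : nat) : seq nat :=
  if x == a then [:: 0%N] else [seq (val j).+1 | j <- enum J].

Definition letter_in (J : {set 'I_n}) (y : nat) : bool :=
  [forall j : 'I_n, (y == (val j).+1) ==> (j \in J)].

Definition pos_letters (w : seq nat) : {set 'I_n} := [set j : 'I_n | (val j).+1 \in w].

Definition zero_at (i : nat) (w : seq nat) : bool :=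
  (size w == n.+1) &&
  all (fun j => if j == i then nth 0%N w j == 0%N else (0 < nth 0%N w j < n.+1)%N)
      (iota 0 n.+1).

Lemma uniq_restr_vars J x : uniq (restr_vars J x).
Proof.
by rewrite /restr_vars; case: ifP => // _; rewrite map_inj_uniq ?enum_uniq // => i j [] /val_inj.
Qed.

Lemma mem_restr_vars J x y :
  (y \in restr_vars J x) = (y \in restr_vars setT x) && letter_in J y.
Proof.
rewrite /restr_vars /letter_in; case: (x == a).
  by rewrite inE; case: eqP => // ->; symmetry; apply/forallP.
apply/mapP/andP => [[j Jj ->]|[/mapP[j _ ->] /forallP/(_ j)]].
  split; first by apply: map_f; rewrite mem_enum inE.
  by apply/forallP => i; apply/implyP => /eqP/succn_inj/val_inj <-; rewrite -mem_enum.
by rewrite eqxx /= => Jj; exists j; rewrite ?mem_enum.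
Qed.

Lemma all_letter_in J w : all (letter_in J) w = (pos_letters w \subset J).
Proof.
apply/allP/subsetP => [inJ j|subJ y wy]; first by rewrite inE => /inJ /forallP/(_ j); rewrite eqxx.
by apply/forallP => j; apply/implyP => /eqP yj; apply: subJ; rewrite inE -yj.
Qed.

Lemma all2_restr_vars_setT i w : (i <= n)%N ->
  all2 (fun x y => y \in restr_vars setT x) (comm_word a b n i) w = zero_at i w.
Proof.
move=> le_in; rewrite all2_nth size_comm_word // /zero_at eq_sym; congr (_ && _).
apply: eq_in_all => j; rewrite mem_iota ltnS => /andP[_ le_jn].
rewrite nth_comm_word // /restr_vars; case: (j == i); rewrite ?eqxx ?inE //.
rewrite eq_sym (negbTE neq_ab); set y := nth 0%N w j.
apply/mapP/andP => [[j' _ ->]|[y_gt0 y_le]]; first by rewrite ltnS ltn_ord.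
have lt_yn : (y.-1 < n)%N by lia.
by exists (Ordinal lt_yn); rewrite ?mem_enum ?inE //=; lia.
Qed.

Lemma all2_restr_vars J i w : (i <= n)%N ->
  all2 (fun x y => y \in restr_vars J x) (comm_word a b n i) w =
  zero_at i w && (pos_letters w \subset J).
Proof.
move=> le_in.
have -> : (fun x y => y \in restr_vars J x) =
          (fun x y => (y \in restr_vars setT x) && letter_in J y).
  by do 2![apply: functional_extensionality => ?]; rewrite mem_restr_vars.
by rewrite all2_andr all2_restr_vars_setT ?all_letter_in.
Qed.


Lemma zero_at_perm_word (s : {perm 'I_n.+1}) (i : 'I_n.+1) :
  zero_at i (perm_word s) = (s i == ord0).
Proof.
rewrite /zero_at size_perm_word eqxx andTb; apply/allP/eqP => [w_i|si0 j].
  move: (w_i i); rewrite mem_iota ltn_ord eqxx (nth_perm_word s i) => /(_ isT) /eqP si0.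
  exact: val_inj.
rewrite mem_iota /= => lt_jn; rewrite (nth_perm_word s (Ordinal lt_jn)) ltn_ord andbT.
have [eq_ji|neq_ji] := eqVneq j i; first by rewrite (_ : Ordinal lt_jn = i) ?si0 //; exact: val_inj.
rewrite lt0n -[_ == 0%N]/(s (Ordinal lt_jn) == ord0) -si0 (inj_eq perm_inj).
exact: neq_ji.
Qed.

Lemma pos_letters_perm_word (s : {perm 'I_n.+1}) : pos_letters (perm_word s) = setT.
Proof.
apply/setP => j; rewrite !inE; have lt_jn : ((val j).+1 < n.+1)%N by rewrite ltnS ltn_ord.
rewrite (_ : (val j).+1 = s ((s^-1)%g (Ordinal lt_jn))); last by rewrite permKV.
by apply: map_f; rewrite mem_enum.
Qed.

Lemma zero_at_cover i w : (i <= n)%N -> zero_at i w -> pos_letters w = setT ->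
  {subset iota 0 n.+1 <= w}.
Proof.
move=> le_in /andP[/eqP size_w /allP w_i] full m; rewrite mem_iota /=.
case: m => [|m] lt_mn.
  move: (w_i i); rewrite mem_iota add0n ltnS le_in eqxx => /(_ isT) /eqP <-.
  by rewrite mem_nth // size_w ltnS.
by move: (in_setT (Ordinal (lt_mn : (m < n)%N))); rewrite -full inE.
Qed.

(* The letter 0 of a word of S_{n+1} sits at exactly one position. *)
Lemma sum_zero_at_full w :
  \sum_(i < n.+1) ((zero_at i w && (pos_letters w == setT))%:R : k) =
  denote (nc_symm k n.+1) w.
Proof.
have -> : nc_symm k n.+1 = [seq (1, u) | u <- [seq perm_word s | s <- enum {perm 'I_n.+1}]].
  by rewrite -map_comp.
rewrite denote_ones count_uniq_mem ?(map_inj_uniq (@perm_word_inj _)) ?enum_uniq //.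
have [/mapP[s _ ->]|not_perm] := boolP (w \in _).
  rewrite pos_letters_perm_word eqxx (bigD1 ((s^-1)%g ord0)) //= zero_at_perm_word permKV.
  rewrite eqxx big1 ?addr0 // => j; rewrite zero_at_perm_word (can2_eq (permK s) (permKV s)).
  by move/negbTE ->.
apply: big1 => i _; case: (boolP (_ && _)) => // /andP[zero_i /eqP full].
have [s ws] := perm_word_surj (eqP (proj1 (andP zero_i))) (zero_at_cover (ltn_ord i) zero_i full).
by move: not_perm; rewrite -ws map_f ?mem_enum.
Qed.

Lemma nc_noconst_comm_sum : nc_noconst (comm_sum k a b n).
Proof. by rewrite /nc_noconst all_map; apply/allP => i _; rewrite /= -size_eq0 size_cat /= addnS. Qed.

(* Inclusion-exclusion over the sets J of variables substituted for b. *)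
Lemma Tspace_symm_of_comm_sum (S : (seq nat -> k) -> Prop) :
  Tspace S -> S (denote (comm_sum k a b n)) -> S (denote (nc_symm k n.+1)).
Proof.
move=> S_T S_comm.
pose substJ J := nc_subst (fun x => nc_varsum k (restr_vars J x)) (comm_sum k a b n).
suff -> : denote (nc_symm k n.+1) =
          (fun w => \sum_(J <- index_enum {set 'I_n}) (-1) ^+ #|~: J| * denote (substJ J) w).
  apply: (Tspace_sum _ S_T) => J; apply: (Tspace_scale _ S_T).
  exact: Tspace_subst_varsum S_T nc_noconst_comm_sum S_comm.
apply: functional_extensionality => w; rewrite -sum_zero_at_full.
under eq_bigr => i _ do rewrite (natr_andb (zero_at i w)) -alternating_sum_supsets mulr_sumr.
rewrite exchange_big; apply: eq_bigr => J _.
rewrite /substJ denote_subst_varsum => [|x]; last exact: uniq_restr_vars.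
rewrite mulr_sumr /comm_sum big_map big_mkord.
apply: eq_bigr => i _; rewrite /= mul1r all2_restr_vars ?(natr_andb (zero_at i w)) 1?mulrCA //.
by rewrite -ltnS.
Qed.

End SymmetricFromCommutator.

Lemma Tgen1_sub (k : fieldType) (g h : seq nat -> k) :
  (forall S, Tspace S -> S g -> S h) ->
  forall f, Tgen (fun u => u = h) f -> Tgen (fun u => u = g) f.
Proof. by move=> gh f hf S S_T Sg; apply: hf => // u ->; apply: gh => //; apply: Sg. Qed.

Unset Implicit Arguments.

Theorem proposition4p2 (p : nat) (k : fieldType) (a b : nat) :
  prime p -> p \in [pchar k] -> a <> b ->
  forall f : seq nat -> k,
    R1 p f <->
    Tgen (fun h => h = denote (nc_comm_iter (nc_var k a) (nc_var k b) p.-1)) f.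
Proof.
case: p => [//|n] p_pr p_char /eqP neq_ab f /=.
rewrite /R1 (denote_comm_iter_pchar a b p_pr p_char).
split; apply: Tgen1_sub => S S_T.
- exact: (Tspace_symm_of_comm_sum neq_ab S_T).
- exact: (Tspace_comm_sum_of_symm a b p_pr p_char S_T).
Qed.
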